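(* Let $\mathcal{P}$ be a van Kampen diagram on a surface $\Sigma$ and let $P\in\mathcal{P}$ be a disk with vertex set $V_P$. Then $$-\kappa(P)\geq\frac{\beta(P)-6}{6}.$$
   Context: A van Kampen diagram on a compact surface $\Sigma$ over a presentation $\langle\mathcal{S}\mid\mathcal{R}\rangle$ is a decomposition of $\Sigma$ into finitely many labelled polygons (''disks'') whose boundaries read reduced elements of $\mathcal{R}^{\pm}$, with compatible labels on shared edges; by concatenating edges one assumes every vertex has degree at least $3$. For a disk $P$ with vertices $V_P$ and edges $E_P$: $\deg(v)$ is the number of edges adjacent to $v$, $\deg'(v)$ the number of disks adjacent to $v$, $\epsilon(e)\in\{1,2\}$ the number of disks adjacent to $e$; $\kappa(P)=\sum_{v\in V_P}\frac{1}{\deg'(v)}-\sum_{e\in E_P}\frac{1}{\epsilon(e)}+1$; $\beta(v)=1$ if $\deg(v)\geq3$ and $0$ otherwise; $\beta(P)=\sum_{v\in V_P}\beta(v)$. *)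

(* Combinatorial model of a van Kampen diagram on a compact
   surface, as a polygonal complex given by "sides" (edge occurrences on the
   boundaries of the disks), in the style of combinatorial maps. *)
From mathcomp Require Import all_boot all_order all_algebra perm.
Set Implicit Arguments. Unset Strict Implicit. Unset Printing Implicit Defensive.
Import Order.TTheory GRing.Theory Num.Theory.

(* V : vertices, E : (unoriented) edges, F : disks, S : sides, i.e. the
   occurrences of edges on the boundary polygons of the disks;
   G : generators of the presentation.
   - edge e goes from [src e] to [tgt e];
   - side s lies on the boundary of disk [face s], is an occurrence of edge
     [edge s], traversed along its orientation iff [orient s];
   - [next s] is the side following s along the boundary of its disk;
   - [lab e] is the generator labelling edge e (read along its orientation). *)
Record vk_data (V E F S : finType) (G : Type) := VKData {
  src : E -> V;
  tgt : E -> V;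
  face : S -> F;
  next : {perm S};
  edge : S -> E;
  orient : S -> bool;
  lab : E -> G
}.

Section VK.
Variables (V E F S : finType) (G : eqType) (D : vk_data V E F S G).

Local Notation src := (src D).
Local Notation tgt := (tgt D).
Local Notation face := (face D).
Local Notation next := (next D).
Local Notation edge := (edge D).
Local Notation orient := (orient D).
Local Notation lab := (lab D).

Definition stail (s : S) : V := if orient s then src (edge s) else tgt (edge s).
Definition shead (s : S) : V := if orient s then tgt (edge s) else src (edge s).

(* edge-ends: (e, true) is the tgt-end of e, (e, false) its src-end *)
Definition endpoint (x : E * bool) : V := if x.2 then tgt x.1 else src x.1.

(* The corner of the polygon [face s] located between side s and side next s
   is identified with s; it sits at vertex [shead s].  A corner has two slots:
   the in-slot (b = true), on the edge-end of side s, and the out-slot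
   (b = false), on the edge-end of side next s. *)
Definition slot_end (s : S) (b : bool) : E * bool :=
  if b then (edge s, orient s) else (edge (next s), ~~ orient (next s)).
Definition slot_occ (s : S) (b : bool) : S := if b then s else next s.

(* two corners are adjacent in the link of their vertex when they are glued
   along an edge-end, through two distinct occurrences of the edge *)
Definition link : rel S := fun s t =>
  [exists b1, exists b2,
     (slot_end s b1 == slot_end t b2) && (slot_occ s b1 != slot_occ t b2)].

(* deg v  : number of edges adjacent to v (edge-ends at v; loops count twice)
   deg' v : number of disks adjacent to v (corners at v, with multiplicity)
   eps e  : number of disks adjacent to e (occurrences of e, 1 or 2) *)
Definition deg (v : V) : nat := #|[set x : E * bool | endpoint x == v]|.
Definition deg' (v : V) : nat := #|[set s : S | shead s == v]|.
Definition eps (e : E) : nat := #|[set s : S | edge s == e]|.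

Definition letter_inv (x : G * bool) : G * bool := (x.1, ~~ x.2).
Definition word_inv (w : seq (G * bool)) := rev (map letter_inv w).
Definition freely_reduced (w : seq (G * bool)) :=
  sorted (fun x y => y != letter_inv x) w.

Definition bword (s : S) : seq (G * bool) :=
  [seq (lab (edge t), orient t) | t <- orbit next s].

Definition is_vk_diagram (R : seq (seq (G * bool))) : Prop :=
  (forall s, face (next s) = face s) /\
  (forall s t, face s = face t -> fconnect next s t) /\
  (forall f, exists s, face s = f) /\
  (forall s, stail (next s) = shead s) /\
  (* every edge lies on one or two disk sides (surface / boundary edges) *)
  (forall e, 1 <= eps e <= 2) /\
  (* the link of each vertex is connected (a path or a cycle): surface *)
  (forall s t, shead s = shead t -> connect link s t) /\
  (forall v, 3 <= deg v) /\
  (forall f, exists2 s, face s = f &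
     freely_reduced (bword s) && ((bword s \in R) || (word_inv (bword s) \in R))).

Local Open Scope ring_scope.

(* V_P = corners of P, E_P = sides of P *)
Definition kappa (P : F) : rat :=
  \sum_(s | face s == P) ((deg' (shead s))%:R)^-1
  - \sum_(s | face s == P) ((eps (edge s))%:R)^-1 + 1.

Definition beta (P : F) : nat :=
  \sum_(s | face s == P) (3 <= deg (shead s))%N.

End VK.

From Pilot Require Import Defs.
From mathcomp Require Import all_boot all_order all_algebra.
From mathcomp Require Import perm zify lra.
Set Implicit Arguments. Unset Strict Implicit. Unset Printing Implicit Defensive.
Import Order.TTheory GRing.Theory Num.Theory.
Local Open Scope ring_scope.

(* Distribute 1 - kappa(P) over the corners of P: each corner receives half of
   1/eps from each of its two sides, minus 1/deg' of its vertex.  Counting the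
   slots (corner, side) at a vertex v gives 2 deg'(v) = deg(v) + #(interior
   edge-ends at v), so deg' >= 2 everywhere, and deg' >= 3 at a corner whose
   two sides are interior, unless both sides are the same edge-end; such a
   fold is isolated in the link, which connectivity of the link forbids.
   Hence every corner contributes at least 1/6, and since all vertices have
   degree >= 3, P has beta(P) corners. *)

Lemma corner_term_ge (R : realFieldType) (a b d : nat) :
  (0 < a <= 2)%N -> (0 < b <= 2)%N -> (2 <= d)%N -> (a = 2 -> b = 2 -> 3 <= d)%N ->
  1 / 6 <= a%:R^-1 / 2 + b%:R^-1 / 2 - d%:R^-1 :> R.
Proof.
move=> ha hb hd hd3.
have inv_le k : (0 < k)%N -> (k <= d)%N -> d%:R^-1 <= k%:R^-1 :> R.
  by move=> k_gt0 le_kd; rewrite lef_pV2 ?posrE ?ltr0n ?ler_nat // (leq_trans k_gt0).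
have inv2 := inv_le 2%N isT hd.
have [a1|a2] : a = 1%N \/ a = 2%N by lia.
all: have [b1|b2] : b = 1%N \/ b = 2%N by lia.
all: subst a b; rewrite ?invr1; try lra.
by have := inv_le 3%N isT (hd3 erefl erefl); lra.
Qed.

Section Corners.
Variables (V E F S : finType) (G : eqType) (D : vk_data V E F S G).

Local Notation next := (Defs.next D).
Local Notation edge := (Defs.edge D).
Local Notation shead := (shead D).
Local Notation endpoint := (endpoint D).
Local Notation slot_end := (slot_end D).
Local Notation slot_occ := (slot_occ D).
Local Notation eps := (eps D).
Local Notation deg := (deg D).
Local Notation deg' := (deg' D).

(* A slot of a corner is an edge-end seen through one occurrence of its edge;
   this encoding is a bijection from slots onto such pairs. *)
Definition slot_pair (sb : S * bool) : (E * bool) * S :=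
  (slot_end sb.1 sb.2, slot_occ sb.1 sb.2).

Lemma edge_slot_occ s b : edge (slot_occ s b) = (slot_end s b).1.
Proof. by case: b. Qed.

Lemma slot_pair_inj : injective slot_pair.
Proof.
move=> [s [|]] [t [|]] e_pair; have /= e_occ := congr1 snd e_pair;
  have /= := congr1 fst e_pair; rewrite /slot_end /=.
- by rewrite e_occ.
- by rewrite e_occ => /(congr1 snd) /=; case: (orient D _).
- by rewrite -e_occ => /(congr1 snd) /=; case: (orient D _).
- by rewrite (perm_inj e_occ).
Qed.

Lemma slot_pair_onto x t : edge t = x.1 -> exists sb, slot_pair sb = (x, t).
Proof.
case: x => e c /= et; have [oc|oc] := eqVneq (orient D t) c.
  by exists (t, true); rewrite /slot_pair /slot_end /= et oc.
exists ((next^-1)%g t, false); rewrite /slot_pair /slot_end /= permKV et.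
by move: oc; case: c; case: (orient D t).
Qed.

Hypothesis consecutive_sides : forall s, stail D (next s) = shead s.
Hypothesis eps_range : forall e, (1 <= eps e <= 2)%N.

Lemma endpoint_slot_end s b : endpoint (slot_end s b) = shead s.
Proof.
case: b; rewrite /slot_end /endpoint /=.
  by rewrite /Defs.shead; case: (orient D s).
by rewrite -consecutive_sides /stail; case: (orient D (next s)).
Qed.

Lemma card_corners_slots v :
  (2 * deg' v = #|[set p : (E * bool) * S | (endpoint p.1 == v) && (edge p.2 == p.1.1)]|)%N.
Proof.
have -> : [set p : (E * bool) * S | (endpoint p.1 == v) && (edge p.2 == p.1.1)]
    = slot_pair @: setX [set s | shead s == v] [set: bool].
  apply/setP => -[x t]; rewrite inE /=; apply/andP/imsetP => [[/eqP xv /eqP tx]|].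
    have [[s b] sb_xt] := slot_pair_onto tx.
    exists (s, b); rewrite // !inE andbT -xv.
    by case: sb_xt => <- _; rewrite endpoint_slot_end.
  move=> [[s b]]; rewrite !inE andbT => /eqP sv [-> ->].
  by rewrite endpoint_slot_end sv edge_slot_occ.
by rewrite card_imset; [rewrite cardsX cardsT card_bool mulnC | exact: slot_pair_inj].
Qed.

(* Every boundary edge-end at v is seen by one slot, every interior one by two. *)
Lemma card_corners v :
  (2 * deg' v = deg v + #|[set x | (endpoint x == v) && (eps x.1 == 2)]|)%N.
Proof.
rewrite card_corners_slots.
transitivity (\sum_(x | endpoint x == v) \sum_(t | edge t == x.1) 1)%N.
  by rewrite pair_big_dep sum1dep_card.
rewrite /deg -!sum1dep_card big_mkcondr -big_split /=.
apply: eq_bigr => x _; rewrite sum1dep_card.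
by have := eps_range x.1; rewrite /Defs.eps; case: (#|_|) => [|[|[|]]].
Qed.

Lemma card_corners_ge v : (3 <= deg v)%N -> (2 <= deg' v)%N.
Proof. by move=> deg_ge3; have := card_corners v; lia. Qed.

Lemma shared_edge_occ s t :
  edge t = edge s -> next s != s -> edge (next s) = edge s -> t = s \/ t = next s.
Proof.
move=> ets ns es; have occ2 : [set s; next s] == [set u | edge u == edge s].
  rewrite eqEcard cards2 eq_sym ns; have := eps_range (edge s).
  rewrite /Defs.eps => /andP [_ ->]; rewrite andbT.
  by apply/subsetP => u; rewrite !inE => /orP [] /eqP ->; rewrite ?es.
have : t \in [set u | edge u == edge s] by rewrite inE ets.
by rewrite -(eqP occ2) !inE => /orP [] /eqP; [left | right].
Qed.

(* A corner whose two slots are the same edge-end is a fold of its polygon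
   over a single edge; since the edge has no third occurrence, nothing is
   glued to the fold in the link. *)
Lemma fold_link_isolated s t :
  slot_end s true = slot_end s false -> link D s t -> t = s.
Proof.
move=> fold /existsP [b1 /existsP [b2 /andP [/eqP end_eq _]]].
have end_t : slot_end t b2 = slot_end s true by rewrite -end_eq; case: b1 end_eq.
have ns : next s != s.
  apply: contra_eqN fold => /eqP ns; rewrite /slot_end ns xpair_eqE eqxx /=.
  by case: (orient D s).
have es : edge (next s) = edge s by move: fold => /(congr1 fst).
have e_occ : edge (slot_occ t b2) = edge s by rewrite edge_slot_occ end_t.
have [c occ_c] : exists c, slot_occ t b2 = slot_occ s c.
  by case: (shared_edge_occ e_occ ns es) => ->; [exists true | exists false].
have : slot_pair (t, b2) = slot_pair (s, c).
  by rewrite /slot_pair /= occ_c end_t; case: c {occ_c} => //; rewrite fold.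
by move/slot_pair_inj => -[].
Qed.

Hypothesis link_connected : forall s t, shead s = shead t -> connect (link D) s t.
Hypothesis deg_ge3 : forall v, (3 <= deg v)%N.

Lemma no_fold s : slot_end s true != slot_end s false.
Proof.
apply/negP => /eqP fold; have := card_corners_ge (deg_ge3 (shead s)).
rewrite /Defs.deg' ltnNge => /negP; apply; rewrite -(cards1 s) subset_leq_card //.
apply/subsetP => t; rewrite !inE => /eqP /esym /link_connected /connectP [p].
elim: p s fold => [|u p IHp] s fold /=; first by move=> _ ->.
by move=> /andP [/(fold_link_isolated fold) -> /IHp]; apply.
Qed.

Lemma interior_corner_deg'_ge s :
  eps (edge s) = 2%N -> eps (edge (next s)) = 2%N -> (3 <= deg' (shead s))%N.
Proof.
move=> eps_s eps_ns.
have : (2 <= #|[set x | (endpoint x == shead s) && (eps x.1 == 2)]|)%N.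
  apply: leq_trans (subset_leq_card (_ : [set slot_end s true; slot_end s false] \subset _)).
    by rewrite cards2 no_fold.
  by apply/subsetP => x; rewrite !inE => /orP [] /eqP ->;
    rewrite endpoint_slot_end eqxx /= ?eps_s ?eps_ns.
by have := card_corners (shead s); have := deg_ge3 (shead s); lia.
Qed.

End Corners.

Section Curvature.
Variables (V E F S : finType) (G : eqType) (D : vk_data V E F S G).

Local Notation next := (Defs.next D).
Local Notation face := (Defs.face D).
Local Notation edge := (Defs.edge D).
Local Notation shead := (shead D).

Hypothesis face_next : forall s, face (next s) = face s.

(* Each side is shared by the two corners at its ends, so the edge term of
   kappa splits evenly between corners. *)
Lemma kappa_corner_sum P :
  1 - kappa D P = \sum_(s | face s == P)
    ((eps D (edge s))%:R^-1 / 2 + (eps D (edge (next s)))%:R^-1 / 2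
       - (deg' D (shead s))%:R^-1).
Proof.
have shift : \sum_(s | face s == P) (eps D (edge (next s)))%:R^-1
             = \sum_(s | face s == P) (eps D (edge s))%:R^-1 :> rat.
  rewrite [RHS](reindex_inj (@perm_inj _ next)) /=.
  by apply: eq_bigl => s; rewrite face_next.
rewrite sumrB big_split /= -!mulr_suml shift /kappa; lra.
Qed.

Lemma beta_card (P : F) : (forall v, 3 <= deg D v)%N ->
  beta D P = #|[set s | face s == P]|.
Proof.
by move=> deg_ge3; rewrite -sum1dep_card /beta; apply: eq_bigr => s _; rewrite deg_ge3.
Qed.

End Curvature.

Theorem proposition4p5 (G : eqType) (R : seq (seq (G * bool)))
  (V E F S : finType) (D : vk_data V E F S G) (P : F) :
  is_vk_diagram D R ->
  - kappa D P >= ((beta D P)%:R - 6) / 6.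
Proof.
move=> [face_next [_ [_ [consec [eps_range [link_conn [deg_ge3 _]]]]]]].
have corner_ge s : 1 / 6 <= (eps D (edge D s))%:R^-1 / 2
    + (eps D (edge D (Defs.next D s)))%:R^-1 / 2 - (deg' D (shead D s))%:R^-1 :> rat.
  apply: corner_term_ge; rewrite ?eps_range ?(card_corners_ge consec eps_range) //.
  exact: (interior_corner_deg'_ge consec eps_range link_conn deg_ge3).
have := @ler_sum _ _ (index_enum S) (fun s => face D s == P) _ _ (fun s _ => corner_ge s).
rewrite -kappa_corner_sum // -mulr_suml sumr_const beta_card // cardsE.
lra.
Qed.
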